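(* Let $\Sigma$ be an alphabet with $|\Sigma|\ge3$, $k\ge2$, and $f\colon(\Sigma^* )^k\to\Sigma^*$ RCP. Assume: ( * ) for every $i\in\{1,\ldots,k\}$ and every $u\in\Sigma^*$, the $(k-1)$-ary function $g_{i,u}(x_1,\ldots,x_{i-1},x_{i+1},\ldots,x_k)=f(x_1,\ldots,x_{i-1},u,x_{i+1},\ldots,x_k)$ satisfies exactly one of the conditions ($C_1$), ($C_2$), ($C_3$) below (as a $(k-1)$-ary function); ( ** ) there exist $y\in\Sigma^*\setminus\{\varepsilon\}$ and an index $i\in\{2,\ldots,k\}$ such that $f(y,x_2,\ldots,x_k)\in x_i\Sigma^*$ for all $(x_2,\ldots,x_k)\in(\Sigma^* )^{k-1}$. Then, for this index $i$, $f(z_1,z_2,\ldots,z_k)\in z_i\Sigma^*$ for all $(z_1,\ldots,z_k)\in(\Sigma^* )^k$.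
   Context: $\Sigma^*$ is the free monoid over $\Sigma$ (finite words, concatenation, empty word $\varepsilon$). For a word $w$, $w\Sigma^*$ denotes the set of words having $w$ as a prefix. A function $f\colon(\Sigma^* )^k\to\Sigma^*$ is RCP if for every monoid morphism $\varphi\colon\Sigma^*\to\Sigma^*$ and all $u_1,\ldots,u_k,v_1,\ldots,v_k$ with $\varphi(u_i)=\varphi(v_i)$ for all $i$, we have $\varphi(f(u_1,\ldots,u_k))=\varphi(f(v_1,\ldots,v_k))$. For an $m$-ary function $h\colon(\Sigma^* )^m\to\Sigma^*$ the conditions are: ($C_1$) there exists $b\in\Sigma$ with $h(x_1,\ldots,x_m)\in b\Sigma^*$ for all $x_1,\ldots,x_m\in\Sigma^*$; ($C_2$) there exists $j\in\{1,\ldots,m\}$ with $h(x_1,\ldots,x_m)\in x_j\Sigma^*$ for all $x_1,\ldots,x_m\in\Sigma^*$; ($C_3$) $h(x_1,\ldots,x_m)=\varepsilon$ for all $x_1,\ldots,x_m\in\Sigma^*$. *)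

From mathcomp Require Import all_boot.
Set Implicit Arguments. Unset Strict Implicit. Unset Printing Implicit Defensive.

(* Words over the alphabet T are sequences [seq T]; concatenation is [++],
   the empty word is [::]. An m-ary word function takes a finite function
   'I_m -> seq T (the argument tuple, 0-indexed). *)

Definition inPrefix (T : Type) (w s : seq T) : Prop := exists t, s = w ++ t.

Definition monoid_morph (T : Type) (phi : seq T -> seq T) : Prop :=
  phi [::] = [::] /\ forall u v, phi (u ++ v) = phi u ++ phi v.

Definition RCP (T : finType) (k : nat) (f : {ffun 'I_k -> seq T} -> seq T) : Prop :=
  forall phi : seq T -> seq T, monoid_morph phi ->
  forall u v : {ffun 'I_k -> seq T},
    (forall i, phi (u i) = phi (v i)) -> phi (f u) = phi (f v).

Definition C1 (T : finType) (m : nat) (h : {ffun 'I_m -> seq T} -> seq T) : Prop :=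
  exists b : T, forall x, inPrefix [:: b] (h x).
Definition C2 (T : finType) (m : nat) (h : {ffun 'I_m -> seq T} -> seq T) : Prop :=
  exists j : 'I_m, forall x : {ffun 'I_m -> seq T}, inPrefix (x j) (h x).
Definition C3 (T : finType) (m : nat) (h : {ffun 'I_m -> seq T} -> seq T) : Prop :=
  forall x, h x = [::].

Definition exactly_one (A B C : Prop) : Prop :=
  (A /\ ~ B /\ ~ C) \/ (~ A /\ B /\ ~ C) \/ (~ A /\ ~ B /\ C).

Definition ins (T : Type) (k : nat) (i : 'I_k) (u : seq T)
  (x : {ffun 'I_k.-1 -> seq T}) : {ffun 'I_k -> seq T} :=
  [ffun j => match unlift i j with Some j' => x j' | None => u end].

Definition fix_arg (T : finType) (k : nat) (f : {ffun 'I_k -> seq T} -> seq T)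
  (i : 'I_k) (u : seq T) : {ffun 'I_k.-1 -> seq T} -> seq T :=
  fun x => f (ins i u x).

(* Write y = y0 :: ys.  First, for a letter d <> y0, every tuple with z_i = [d] has an image
   starting with d: a probe tuple carrying y in the first slot, [d] in slot i and a third
   letter e elsewhere has an image starting with d, which rules out C3 and C2 for g_{i,[d]},
   and pins the letter of C1 to d.  Second, fix an arbitrary first argument z_1: probing
   g_{1,z_1} in the same way, with a letter d avoiding y0 (and the C1 letter) in slot i and a
   letter e <> d elsewhere, rules out every case except C2 at position i. *)
From mathcomp Require Import all_boot.
Set Implicit Arguments. Unset Strict Implicit. Unset Printing Implicit Defensive.

Lemma inPrefix1_inj (T : Type) (a b : T) (s : seq T) :
  inPrefix [:: a] s -> inPrefix [:: b] s -> a = b.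
Proof. by move=> [t ->] [t' /=] [->]. Qed.

Lemma inPrefix1_nil (T : Type) (a : T) : ~ inPrefix [:: a] [::].
Proof. by case. Qed.

Lemma inPrefix_cons1 (T : Type) (a : T) (w s : seq T) :
  inPrefix (a :: w) s -> inPrefix [:: a] s.
Proof. by move=> [t ->]; exists (w ++ t). Qed.

Lemma exists_neq2 (T : finType) (a b : T) : 3 <= #|T| -> exists d : T, d != a /\ d != b.
Proof.
move=> hT; have /card_gt0P [d] : 0 < #|~: [set a; b]|.
  by rewrite cardsCs setCK cards2 subn_gt0; apply: leq_trans hT; case: (a != b).
by rewrite !inE negb_or => /andP[]; exists d.
Qed.

Definition restrict (T : Type) (k : nat) (q : 'I_k) (z : {ffun 'I_k -> seq T}) :
  {ffun 'I_k.-1 -> seq T} := [ffun j => z (lift q j)].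

Lemma ins_restrict (T : Type) (k : nat) (q : 'I_k) (z : {ffun 'I_k -> seq T}) :
  ins q (z q) (restrict q z) = z.
Proof.
by apply/ffunP => j; rewrite /ins ffunE; case: unliftP => [j' ->|->]; rewrite ?ffunE.
Qed.

Lemma fix_arg_restrict (T : finType) (k : nat) (f : {ffun 'I_k -> seq T} -> seq T)
    (q : 'I_k) (z : {ffun 'I_k -> seq T}) :
  fix_arg f q (z q) (restrict q z) = f z.
Proof. by rewrite /fix_arg ins_restrict. Qed.

Lemma fix_arg_cases (T : finType) (k : nat) (f : {ffun 'I_k -> seq T} -> seq T)
    (q : 'I_k) (u : seq T) :
  exactly_one (C1 (fix_arg f q u)) (C2 (fix_arg f q u)) (C3 (fix_arg f q u)) ->
  [\/ exists b : T, forall z : {ffun 'I_k -> seq T}, z q = u -> inPrefix [:: b] (f z),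
      exists j : 'I_k.-1,
        forall z : {ffun 'I_k -> seq T}, z q = u -> inPrefix (z (lift q j)) (f z)
    | forall z : {ffun 'I_k -> seq T}, z q = u -> f z = [::]].
Proof.
case=> [[[b hb] _]|[[_ [[j hj] _]]|[_ [_ h0]]]]; [apply: Or31|apply: Or32|apply: Or33].
- by exists b => z zq; move: (hb (restrict q z)); rewrite -zq fix_arg_restrict.
- by exists j => z zq; move: (hj (restrict q z)); rewrite -zq fix_arg_restrict ffunE.
- by move=> z zq; move: (h0 (restrict q z)); rewrite -zq fix_arg_restrict.
Qed.

Section Probing.

Variables (T : finType) (k : nat) (f : {ffun 'I_k -> seq T} -> seq T).
Hypothesis hT : 3 <= #|T|.
Hypothesis hstar : forall (q : 'I_k) (u : seq T),
  exactly_one (C1 (fix_arg f q u)) (C2 (fix_arg f q u)) (C3 (fix_arg f q u)).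
Variables (p i : 'I_k).
Hypothesis p_neq_i : p != i.

Definition probe (w : seq T) (d e : T) : {ffun 'I_k -> seq T} :=
  [ffun j => if j == p then w else if j == i then [:: d] else [:: e]].

Lemma probe_p w d e : probe w d e p = w.
Proof. by rewrite ffunE eqxx. Qed.

Lemma probe_i w d e : probe w d e i = [:: d].
Proof. by rewrite ffunE eq_sym (negbTE p_neq_i) eqxx. Qed.

Lemma probe_other w d e j : j != p -> j != i -> probe w d e j = [:: e].
Proof. by move=> /negbTE jp /negbTE ji; rewrite ffunE jp ji. Qed.

Variables (y0 : T) (ys : seq T).
Hypothesis hy : forall z : {ffun 'I_k -> seq T}, z p = y0 :: ys -> inPrefix (z i) (f z).

Lemma head_at_i d :
  d != y0 -> forall z : {ffun 'I_k -> seq T}, z i = [:: d] -> inPrefix [:: d] (f z).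
Proof.
move=> dy0; have [e [ed _]] := exists_neq2 d d hT.
pose t := probe (y0 :: ys) d e.
have ht : inPrefix [:: d] (f t) by rewrite -(probe_i (y0 :: ys) d e); apply/hy/probe_p.
case: (fix_arg_cases (hstar i [:: d])) => [[b hb]|[j hj]|h0].
- by move=> z /hb; rewrite (inPrefix1_inj (hb t (probe_i _ _ _)) ht).
- exfalso; have := hj t (probe_i _ _ _); have [jp|jp] := eqVneq (lift i j) p.
    rewrite jp probe_p => hy0.
    by move: dy0; rewrite -(inPrefix1_inj ht (inPrefix_cons1 hy0)) eqxx.
  have ji : lift i j != i by rewrite eq_sym neq_lift.
  rewrite probe_other // => he.
  by move: ed; rewrite -(inPrefix1_inj ht he) eqxx.
- by move: ht; rewrite h0 ?probe_i // => ht; case: (inPrefix1_nil ht).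
Qed.

Lemma prefix_at_i (z : {ffun 'I_k -> seq T}) : inPrefix (z i) (f z).
Proof.
have head_probe d e : d != y0 -> inPrefix [:: d] (f (probe (z p) d e)).
  by move=> dy0; apply: head_at_i dy0 _ (probe_i _ _ _).
have [d [dy0 _]] := exists_neq2 y0 y0 hT; have [e [ed _]] := exists_neq2 d d hT.
have hd := head_probe d e dy0.
case: (fix_arg_cases (hstar p (z p))) => [[b hb]|[j hj]|h0].
- have [c [cb cy0]] := exists_neq2 b y0 hT.
  have hc := hb _ (probe_p (z p) c c).
  by move: cb; rewrite (inPrefix1_inj (head_probe c c cy0) hc) eqxx.
- have [ji|ji] := eqVneq (lift p j) i; first by rewrite -ji; apply: hj.
  have jp : lift p j != p by rewrite eq_sym neq_lift.
  have := hj _ (probe_p (z p) d e); rewrite probe_other // => he.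
  by move: ed; rewrite (inPrefix1_inj he hd) eqxx.
- by move: hd; rewrite h0 ?probe_p // => hd; case: (inPrefix1_nil hd).
Qed.

End Probing.

Theorem mainTheorem17 (T : finType) (k : nat) (f : {ffun 'I_k -> seq T} -> seq T)
  (hT : 3 <= #|T|) (hk : 2 <= k) (hf : RCP f)
  (hstar : forall (i : 'I_k) (u : seq T),
      exactly_one (C1 (fix_arg f i u)) (C2 (fix_arg f i u)) (C3 (fix_arg f i u)))
  (y : seq T) (hy : y <> [::]) (i : 'I_k) (hi : 0 < nat_of_ord i)
  (hstar2 : forall z : {ffun 'I_k -> seq T},
      (forall j : 'I_k, nat_of_ord j = 0 -> z j = y) -> inPrefix (z i) (f z)) :
  forall z : {ffun 'I_k -> seq T}, inPrefix (z i) (f z).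
Proof.
case: y hy hstar2 => [//|y0 ys] _ hstar2.
pose p0 : 'I_k := Ordinal (ltnW hk).
have p0_neq_i : p0 != i by rewrite -val_eqE /= eq_sym -lt0n.
apply: (prefix_at_i hT hstar p0_neq_i (y0 := y0) (ys := ys)) => z zp0.
by apply: hstar2 => j /eqP j0; rewrite -zp0; congr (z _); apply/val_inj/eqP.
Qed.
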